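(* Let $k\ge 2$ and let $\mathcal{H}=(V,E)$ be a hypergraph such that: $\mathcal{H}$ is linear and $k$-uniform; $|V|=k^2$; $|E|=k^2+1$; and there is a hyperedge $e_0\in E$ such that $\mathrm{deg}_{\mathcal{H}}(x)=k+1$ for all $x\in e_0$ and $\mathrm{deg}_{\mathcal{H}}(x)\ge k$ for all $x\in V\smallsetminus e_0$. Then (i) $\Delta([\mathcal{H}]_2)=k^2-1$ and $\delta([\mathcal{H}]_2)=k^2-k$; (ii) $k+1\le \mathrm{q}(\mathcal{H})\le 1+k\lceil k/2\rceil$; (iii) $\mathrm{q}(\mathcal{H})\le \Delta([\mathcal{H}]_2)$.
   Context: A hypergraph $\mathcal{H}=(V,E)$ has a finite vertex set $V$ and a finite set $E$ of nonempty subsets of $V$ (hyperedges). It is linear if $|e\cap e'|\le1$ for distinct hyperedges, $k$-uniform if every hyperedge has exactly $k$ elements. $\mathrm{deg}_{\mathcal{H}}(x)$ is the number of hyperedges containing $x$. The 2-section $[\mathcal{H}]_2$ is the simple graph on $V$ where distinct vertices are adjacent iff some hyperedge contains both; $\Delta([\mathcal{H}]_2)$ and $\delta([\mathcal{H}]_2)$ are its maximum and minimum degrees. The chromatic index $\mathrm{q}(\mathcal{H})$ is the least number of colors in a coloring of the hyperedges in which distinct intersecting hyperedges get different colors. *)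

From mathcomp Require Import all_boot.
Set Implicit Arguments. Unset Strict Implicit. Unset Printing Implicit Defensive.

Section Hypergraph.
Variable V : finType.
Implicit Types (E : {set {set V}}) (x y : V).

Definition hypergraph E : Prop := set0 \notin E.

Definition linear E : Prop :=
  forall e e', e \in E -> e' \in E -> e != e' -> #|e :&: e'| <= 1.

Definition uniform (k : nat) E : Prop := forall e, e \in E -> #|e| = k.

Definition deg E x : nat := #|[set e in E | x \in e]|.

Definition adj2 E x y : bool :=
  (x != y) && [exists e in E, (x \in e) && (y \in e)].

Definition deg2 E x : nat := #|[set y | adj2 E x y]|.

(* maximum / minimum degree of the 2-section (V is nonempty in use;
   the min uses #|V| as neutral element, which exceeds every degree) *)
Definition Delta2 E : nat := \max_(x : V) deg2 E x.
Definition delta2 E : nat := \big[minn/#|V|]_(x : V) deg2 E x.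

Definition colorable E (c : nat) : bool :=
  [exists f : {ffun {set V} -> 'I_c},
    [forall e in E, forall e' in E,
       ((e != e') && (e :&: e' != set0)) ==> (f e != f e')]].

(* chromatic index: the least c such that E is c-colourable
   (E is always #|E|-colourable, so the minimum over c <= #|E| is the true one) *)
Definition chromatic_index E : nat :=
  \big[minn/#|E|]_(c < #|E|.+1 | colorable E c) (c : nat).

End Hypergraph.

(* Counting incidences shows that every edge other than e0 meets e0 in exactly one point, and
   that a point z outside e0 has degree k and is joined to every point of e0. In a linear
   k-uniform hypergraph a vertex of degree d has d(k-1) neighbours in the 2-section, which gives
   both degree bounds. For distinct x, y in e0, an edge f through x meets exactly k - 1 of the k
   edges through y other than e0 (one through each point of f other than x), so exactly one of
   them is disjoint from f. Pairing up the points of e0, the edges through the second point of a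
   pair may thus reuse the colours of the edges through the first one, which gives a proper
   colouring with 1 + k * ceil(k/2) colours; the k + 1 edges through a point of e0 need
   distinct colours. *)

From mathcomp Require Import all_boot zify.
Set Implicit Arguments. Unset Strict Implicit. Unset Printing Implicit Defensive.

Lemma card_set_in_sum (T : finType) (A : {set T}) (P : pred T) :
  #|[set x in A | P x]| = \sum_(x in A) P x.
Proof. by rewrite -sum1dep_card big_mkcondr. Qed.

Lemma sum_card_setI (T : finType) (F : {set {set T}}) (D : {set T}) :
  \sum_(e in F) #|e :&: D| = \sum_(y in D) #|[set e in F | y \in e]|.
Proof.
have setI_in (e : {set T}) : e :&: D = [set y in D | y \in e].
  by apply/setP => y; rewrite !inE andbC.
under eq_bigr => e _ do rewrite setI_in card_set_in_sum.
by rewrite exchange_big; apply: eq_bigr => y _; rewrite card_set_in_sum.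
Qed.

Lemma sum_leq1_card (I : finType) (A : {set I}) (F : I -> nat) :
  {in A, forall i, F i <= 1} -> \sum_(i in A) F i = #|[set i in A | 0 < F i]|.
Proof.
by move=> F_le1; rewrite card_set_in_sum; apply: eq_bigr => i /F_le1; case: (F i) => [|[]].
Qed.

Lemma sum_leq1_eq_card (I : finType) (A : {set I}) (F : I -> nat) :
  {in A, forall i, F i <= 1} -> \sum_(i in A) F i = #|A| -> {in A, forall i, F i = 1}.
Proof.
move=> F_le1; rewrite sum_leq1_card // => card_eq i Ai.
have : i \in [set j in A | 0 < F j].
  suff -> : [set j in A | 0 < F j] = A by [].
  apply/eqP; rewrite eqEcard card_eq leqnn andbT.
  by apply/subsetP => j; rewrite inE => /andP[].
by rewrite inE Ai; have := F_le1 i Ai; case: (F i) => [|[]].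
Qed.

Lemma card_bigcup_leq (I T : finType) (P : pred I) (A : I -> {set T}) :
  #|\bigcup_(i | P i) A i| <= \sum_(i | P i) #|A i|.
Proof.
apply: (big_ind2 (fun (U : {set T}) n => #|U| <= n)); first by rewrite cards0.
  by move=> U1 n1 U2 n2 le1 le2; apply: leq_trans (leq_card_setU U1 U2) (leq_add le1 le2).
by [].
Qed.

Lemma bigminn_leq (I : finType) (P : pred I) (F : I -> nat) d i0 :
  P i0 -> \big[minn/d]_(i | P i) F i <= F i0.
Proof.
move=> Pi0; have : i0 \in index_enum I by rewrite mem_index_enum.
elim: (index_enum I) => // j r IHr; rewrite inE big_cons => /predU1P[<- | /IHr le_r].
  by rewrite Pi0 geq_minl.
by case: (P j) => //; apply: leq_trans (geq_minr _ _) le_r.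
Qed.

Lemma leq_bigminn (I : finType) (P : pred I) (F : I -> nat) d m :
  m <= d -> (forall i, P i -> m <= F i) -> m <= \big[minn/d]_(i | P i) F i.
Proof.
by move=> le_md le_mF; elim/big_ind: _ => // a b; rewrite leq_min => -> ->.
Qed.

Lemma count_even_iota n : count (fun i => ~~ odd i) (iota 0 n) = uphalf n.
Proof.
elim: n => // n IHn; rewrite -addn1 iotaD count_cat IHn /= addn0.
by rewrite !uphalf_half /=; case: (odd n); lia.
Qed.

Lemma map_index_iota (T : eqType) (s : seq T) :
  uniq s -> map (index^~ s) s = iota 0 (size s).
Proof.
case: s => // x0 s' uniq_s; apply: (@eq_from_nth _ 0); rewrite size_map ?size_iota //.
by move=> i lt_i; rewrite (nth_map x0) // nth_iota // index_uniq.
Qed.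

Lemma exists_half_pairing (T : finType) (A : {set T}) :
  exists (B : {set T}) (mate : T -> T), [/\ B \subset A, #|B| = uphalf #|A|,
    {in A :\: B, forall x, mate x \in B} & {in A :\: B &, injective mate}].
Proof.
pose s := enum A; have uniq_s : uniq s := enum_uniq _.
pose B := [set x in A | ~~ odd (index x s)].
pose mate x := nth x s (index x s).-1.
have index_mate x : x \in A :\: B ->
    [/\ x \in s, odd (index x s), mate x \in s & index (mate x) s = (index x s).-1].
  case/setDP=> xA; rewrite inE xA negbK => odd_i.
  have lt_i : (index x s).-1 < size s.
    by apply: leq_ltn_trans (leq_pred _) _; rewrite index_mem mem_enum.
  by rewrite mem_enum xA odd_i mem_nth // index_uniq.
exists B, mate; split.
- by apply/subsetP => x; rewrite inE => /andP[].
- have eqB : B =i [seq x <- s | ~~ odd (index x s)].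
    by move=> x; rewrite inE mem_filter mem_enum andbC.
  rewrite (eq_card eqB) (card_uniqP (filter_uniq _ uniq_s)) size_filter.
  rewrite -[LHS](count_map (index^~ s) (fun i => ~~ odd i)) map_index_iota //.
  by rewrite count_even_iota cardE.
- move=> x /index_mate[_ odd_i mate_s i_mate].
  rewrite inE -mem_enum mate_s i_mate /=.
  by case: (index x s) odd_i.
- move=> x y /index_mate[xs odd_x _ ix] /index_mate[ys odd_y _ iy] eq_mate.
  have eq_i : index x s = index y s.
    by rewrite -(prednK (odd_gt0 odd_x)) -(prednK (odd_gt0 odd_y)) -ix -iy eq_mate.
  by rewrite -(nth_index y xs) eq_i nth_index.
Qed.

Definition star (V : finType) (E : {set {set V}}) (x : V) := [set e in E | x \in e].

Section LinearHypergraph.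
Variables (V : finType) (E : {set {set V}}).
Hypothesis linE : linear E.

Lemma linear_edge_eq e e' x y : e \in E -> e' \in E -> x != y ->
  x \in e -> y \in e -> x \in e' -> y \in e' -> e = e'.
Proof.
move=> eE e'E xy xe ye xe' ye'; apply/eqP; apply: contraT => /(linE eE e'E).
have : [set x; y] \subset e :&: e'.
  by apply/subsetP => z; rewrite !inE => /orP[] /eqP ->; rewrite ?xe ?xe' ?ye ?ye'.
by move/subset_leq_card; rewrite cards2 xy; lia.
Qed.

Lemma linear_card_star2 x y : x != y -> #|star E x :&: star E y| <= 1.
Proof.
move=> xy; apply/card_le1_eqP => e e'; rewrite !inE.
case/andP=> /andP[eE xe] /andP[_ ye] /andP[/andP[e'E xe'] /andP[_ ye']].
exact: linear_edge_eq e'E eE xy xe' ye' xe ye.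
Qed.

Lemma deg2_linear x : deg2 E x = \sum_(e in star E x) #|e :\ x|.
Proof.
have star_le1 : {in [set~ x], forall y, #|[set e in star E x | y \in e]| <= 1}.
  move=> y; rewrite in_setC1 eq_sym => xy; apply: leq_trans (linear_card_star2 xy).
  by apply/subset_leq_card/subsetP => e; rewrite !inE => /andP[/andP[-> ->] ->].
rewrite (eq_bigr (fun e => #|e :&: [set~ x]|)) => [|e _]; last by rewrite setDE.
rewrite sum_card_setI sum_leq1_card //; apply: eq_card => y.
rewrite !inE /adj2 eq_sym; congr (_ && _); apply/existsP/card_gt0P.
  by case=> e /and3P[eE xe ye]; exists e; rewrite !inE eE xe ye.
by case=> e; rewrite !inE => /andP[/andP[eE xe] ye]; exists e; rewrite eE xe ye.
Qed.

End LinearHypergraph.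

Section ChromaticIndex.
Variables (V : finType) (E : {set {set V}}).

Lemma colorable_deg c x : colorable E c -> deg E x <= c.
Proof.
case/existsP=> col /forall_inP proper_col.
rewrite /deg -[c]card_ord -(card_in_imset (f := col)); first exact: max_card.
move=> e e'; rewrite !inE => /andP[eE xe] /andP[e'E xe'] /eqP; apply: contraTeq => neq.
have /forall_inP/(_ e' e'E)/implyP := proper_col e eE; apply.
by rewrite neq; apply/set0Pn; exists x; rewrite inE xe xe'.
Qed.

Lemma chromatic_index_leq c : colorable E c -> c <= #|E| -> chromatic_index E <= c.
Proof.
by move=> col_c le_c; apply: (bigminn_leq _ _ (i0 := Ordinal (le_c : c < #|E|.+1))).
Qed.

Lemma deg_leq_chromatic_index x : deg E x <= chromatic_index E.
Proof.
apply: leq_bigminn => [|c /colorable_deg //].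
by apply/subset_leq_card/subsetP => e; rewrite inE => /andP[].
Qed.

Lemma colorable_map (C : finType) (col : {set V} -> C) c : 0 < c ->
  {in E &, forall e e', e != e' -> e :&: e' != set0 -> col e != col e'} ->
  #|col @: E| <= c -> colorable E c.
Proof.
case: c => // c _ proper_col card_col; pose s := enum (col @: E).
have index_lt e : e \in E -> index (col e) s < c.+1.
  by move=> eE; apply: leq_trans card_col; rewrite cardE index_mem mem_enum imset_f.
apply/existsP; exists [ffun e => inord (index (col e) s)].
apply/forall_inP => e eE; apply/forall_inP => e' e'E; apply/implyP => /andP[neq meet].
rewrite !ffunE; apply: contra (proper_col e e' eE e'E neq meet) => /eqP/(congr1 val).
rewrite /= !inordK ?index_lt // => /(congr1 (nth (col e) s)).
by rewrite !nth_index ?mem_enum ?imset_f // => ->.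
Qed.

End ChromaticIndex.

Section Configuration.
Variables (k : nat) (V : finType) (E : {set {set V}}) (e0 : {set V}).
Hypotheses (linE : linear E) (unifE : uniform k E)
  (card_E : #|E| = k ^ 2 + 1) (e0E : e0 \in E)
  (deg_e0 : forall x, x \in e0 -> deg E x = k + 1)
  (deg_out_ge : forall x, x \notin e0 -> k <= deg E x).

Definition pencil y := star E y :\ e0.

Lemma card_pencil y : y \in e0 -> #|pencil y| = k.
Proof.
by move=> ye0; have := deg_e0 ye0; rewrite /deg (cardsD1 e0) inE e0E ye0 add1n addn1 => -[].
Qed.

Lemma foot_unique f y y' : f \in E -> f != e0 ->
  y \in f -> y \in e0 -> y' \in f -> y' \in e0 -> y = y'.
Proof.
move=> fE fe0 yf ye0 y'f y'e0; have /card_le1_eqP := linE fE e0E fe0.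
by apply; rewrite inE ?yf ?y'f.
Qed.

Lemma card_setI_e0 f : f \in E -> f != e0 -> #|f :&: e0| = 1.
Proof.
move=> fE fe0; apply: (sum_leq1_eq_card (A := E :\ e0) (F := fun g => #|g :&: e0|)).
- by move=> g; rewrite !inE => /andP[ge0 gE]; exact: linE.
- rewrite sum_card_setI (eq_bigr (fun _ => k)) => [|y ye0]; last first.
    by rewrite -(card_pencil ye0); apply: eq_card => g; rewrite !inE andbA.
  rewrite sum_nat_const (unifE e0E); have := cardsD1 e0 E.
  by rewrite e0E card_E add1n addn1 mulnn => -[].
- by rewrite !inE fE fe0.
Qed.

Lemma exists_foot f : f \in E -> f != e0 -> exists2 y, y \in e0 & f \in pencil y.
Proof.
move=> fE fe0; have /card_gt0P[y] : 0 < #|f :&: e0| by rewrite card_setI_e0.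
by rewrite inE => /andP[yf ye0]; exists y; rewrite // !inE fe0 fE yf.
Qed.

Lemma sum_star_out z : z \notin e0 ->
  \sum_(y in e0) #|star E z :&: star E y| = deg E z.
Proof.
move=> ze0; transitivity (\sum_(f in star E z) #|f :&: e0|).
  rewrite sum_card_setI; apply: eq_bigr => y _; apply: eq_card => f.
  by rewrite !inE; case: (f \in E).
rewrite /deg -sum1_card; apply: eq_bigr => f; rewrite inE => /andP[fE zf].
by rewrite card_setI_e0 //; apply: contraNneq ze0 => <-.
Qed.

Lemma deg_out z : z \notin e0 -> deg E z = k.
Proof.
move=> ze0; apply/eqP; rewrite eqn_leq deg_out_ge // andbT -sum_star_out //.
rewrite -(unifE e0E) -sum1_card; apply: leq_sum => y ye0.
by apply: (linear_card_star2 linE); apply: contraNneq ze0 => ->.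
Qed.

Lemma card_star_out z y : z \notin e0 -> y \in e0 -> #|star E z :&: star E y| = 1.
Proof.
move=> ze0; apply: (sum_leq1_eq_card (F := fun y => #|star E z :&: star E y|)).
  by move=> y' y'e0; apply: (linear_card_star2 linE); apply: contraNneq ze0 => ->.
by rewrite sum_star_out // deg_out // unifE.
Qed.

Lemma card_pencil_disjoint x y f : x \in e0 -> y \in e0 -> x != y -> f \in pencil x ->
  #|[set g in pencil y | [disjoint f & g]]| = 1.
Proof.
move=> xe0 ye0 xy; rewrite !inE => /andP[fe0 /andP[fE xf]].
have pencil_meet_le1 : {in pencil y, forall g, #|g :&: f| <= 1}.
  move=> g; rewrite !inE => /andP[ge0 /andP[gE yg]]; apply: linE => //.
  apply: contraNneq xy => eq_gf; apply/eqP.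
  by apply: (foot_unique fE fe0 xf xe0 _ ye0); rewrite -eq_gf.
have card_pencil_at z : z \in f -> #|[set g in pencil y | z \in g]| = (z != x).
  move=> zf; case: eqVneq => [-> | zx] /=.
    apply/eqP; rewrite cards_eq0; apply/eqP/setP => g; rewrite !inE.
    apply/negP => /andP[/and3P[ge0 gE yg] xg].
    by move: xy; rewrite (foot_unique gE ge0 xg xe0 yg ye0) eqxx.
  have ze0 : z \notin e0 by apply: contra zx => ze0; rewrite (foot_unique fE fe0 zf ze0 xf xe0).
  rewrite -(card_star_out ze0 ye0); apply: eq_card => g; rewrite !inE.
  case: eqVneq => [-> | _] /=; first by rewrite (negbTE ze0) !andbF.
  by case: (g \in E) => //=; rewrite andbC.
have sum_meet : \sum_(g in pencil y) #|g :&: f| = k.-1.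
  rewrite sum_card_setI (eq_bigr _ card_pencil_at) -card_set_in_sum.
  rewrite -(unifE fE) (cardsD1 x f) xf add1n /=.
  by apply: eq_card => z; rewrite !inE andbC.
have split_pencil : #|[set g in pencil y | 0 < #|g :&: f|]|
    + #|[set g in pencil y | [disjoint f & g]]| = #|pencil y|.
  rewrite !card_set_in_sum -big_split -sum1_card /=; apply: eq_bigr => g _.
  by rewrite -setI_eq0 setIC -cards_eq0 lt0n; case: (_ == 0).
have k_gt0 : 0 < k by rewrite -(unifE e0E); apply/card_gt0P; exists x.
move: split_pencil; rewrite -sum_leq1_card // sum_meet card_pencil //; lia.
Qed.

Lemma deg2_eq x : deg2 E x = deg E x * k.-1.
Proof.
rewrite deg2_linear // (eq_bigr (fun _ => k.-1)) ?sum_nat_const // => e.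
by rewrite inE => /andP[eE xe]; rewrite -(unifE eE) (cardsD1 x e) xe.
Qed.

Lemma Delta2_eq : 0 < k -> Delta2 E = k ^ 2 - 1.
Proof.
move=> k_gt0; have [x xe0] : exists x, x \in e0 by apply/card_gt0P; rewrite (unifE e0E).
apply/eqP; rewrite eqn_leq; apply/andP; split.
  apply/bigmax_leqP => z _; rewrite deg2_eq.
  by case: (boolP (z \in e0)) => [/deg_e0 | /deg_out] ->; nia.
by apply: leq_trans (leq_bigmax x); rewrite deg2_eq deg_e0 //; nia.
Qed.

Lemma delta2_eq : 2 <= k -> #|V| = k ^ 2 -> delta2 E = k ^ 2 - k.
Proof.
move=> k_ge2 card_V; have [z] : exists z, z \in ~: e0.
  by apply/card_gt0P; have := cardsC e0; rewrite card_V (unifE e0E); nia.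
rewrite inE => ze0; apply/eqP; rewrite eqn_leq; apply/andP; split.
  apply: leq_trans (bigminn_leq _ _ (i0 := z) _) _ => //.
  by rewrite deg2_eq deg_out //; nia.
apply: leq_bigminn => [|x _]; first by rewrite card_V leq_subr.
by rewrite deg2_eq; case: (boolP (x \in e0)) => [/deg_e0 | /deg_out] ->; nia.
Qed.

Section Recolouring.
Variables (F : {set V}) (mate : V -> V).
Hypotheses (F_e0 : F \subset e0) (mate_F : {in e0 :\: F, forall x, mate x \in F})
  (mate_inj : {in e0 :\: F &, injective mate}).

(* The inner pick fails on [e0], which meets every edge through [mate y]: so [e0] keeps its
   colour, like every edge whose point on [e0] lies in [F]. *)
Definition recolour f :=
  if [pick y in f :&: (e0 :\: F)] is Some y
  then odflt f [pick g in pencil (mate y) | [disjoint f & g]]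
  else f.

Lemma mate_e0 y : y \in e0 :\: F -> mate y \in e0.
Proof. by move/mate_F; apply/subsetP. Qed.

Lemma recolour_e0 : recolour e0 = e0.
Proof.
rewrite /recolour; case: pickP => [y /setIP[_ yD] | _] //.
case: pickP => [g /andP[] | _] //=; rewrite !inE => /and3P[_ _ mate_g].
by move/disjointFr/(_ (mate_e0 yD)); rewrite mate_g.
Qed.

Lemma recolour_pencil f y : f \in pencil y -> y \in e0 ->
  if y \in F then recolour f = f
  else recolour f \in pencil (mate y) /\ [disjoint f & recolour f].
Proof.
move=> fP ye0; have /and3P[fe0 fE yf] : [&& f != e0, f \in E & y \in f].
  by move: fP; rewrite !inE.
rewrite /recolour.
case: pickP => [y' /setIP[y'f /setDP[y'e0 yNF]] | no_y]; last first.
  by case: ifP => // yF; move: (no_y y); rewrite !inE yf ye0 yF.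
have eq_y := foot_unique fE fe0 y'f y'e0 yf ye0; subst y'; rewrite (negbTE yNF).
have yD : y \in e0 :\: F by rewrite inE yNF.
have y_mate : y != mate y by apply: contraTneq (mate_F yD) => <-.
have /card_gt0P[g0] : 0 < #|[set g in pencil (mate y) | [disjoint f & g]]|.
  by rewrite (card_pencil_disjoint ye0 (mate_e0 yD) y_mate fP).
rewrite inE => /andP[g0P dis0].
by case: pickP => [g /andP[] | /(_ g0)] //=; rewrite g0P dis0.
Qed.

Lemma recolour_neq_e0 f : f \in E -> f != e0 -> recolour f != e0.
Proof.
move=> fE fe0; have [y ye0 fP] := exists_foot fE fe0.
case: ifP (recolour_pencil fP ye0) => _; first by move=> ->.
by case; rewrite !inE => /andP[].
Qed.

Lemma recolour_proper : {in E &, forall f f',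
  f != f' -> f :&: f' != set0 -> recolour f != recolour f'}.
Proof.
move=> f f' fE f'E; have [-> | fe0] := eqVneq f e0.
  move=> neq _; rewrite recolour_e0 eq_sym.
  by apply: (recolour_neq_e0 f'E); rewrite eq_sym.
have [-> _ _ | f'e0 neq /set0Pn[z /setIP[zf zf']]] := eqVneq f' e0.
  by rewrite recolour_e0; apply: recolour_neq_e0 fE fe0.
have [y ye0 fP] := exists_foot fE fe0; have [y' y'e0 f'P] := exists_foot f'E f'e0.
have fixed_moved (g g' : {set V}) : recolour g = g -> [disjoint g' & recolour g'] ->
    z \in g -> z \in g' -> recolour g != recolour g'.
  move=> -> dis zg zg'; apply: contraTneq dis => <-.
  by apply/negP => /disjointFr/(_ zg'); rewrite zg.
case: ifP (recolour_pencil fP ye0) => yF; case: ifP (recolour_pencil f'P y'e0) => y'F.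
- by move=> -> ->.
- by move=> [_ dis'] fixed; apply: fixed_moved.
- by move=> fixed' [_ dis]; rewrite eq_sym; apply: fixed_moved.
move=> [g'P dis'] [gP dis]; apply: contraNneq neq => eq_g.
have yD : y \in e0 :\: F by rewrite inE yF.
have y'D : y' \in e0 :\: F by rewrite inE y'F.
have eq_y : y = y'.
  move: (gP) g'P; rewrite -eq_g !inE => /and3P[ge0 gE yg] /and3P[_ _ y'g].
  by apply: mate_inj => //; apply: foot_unique gE ge0 yg (mate_e0 yD) y'g (mate_e0 y'D).
subst y'; have y_mate : mate y != y by apply: contraTneq (mate_F yD) => ->; rewrite yF.
have inD h : h \in pencil y -> [disjoint h & recolour f] ->
    h \in [set h in pencil y | [disjoint recolour f & h]].
  by move=> hP dis_h; rewrite inE hP disjoint_sym.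
have f'D : f' \in [set h in pencil y | [disjoint recolour f & h]].
  by apply: inD; rewrite // eq_g.
have /eq_leq/card_le1_eqP := card_pencil_disjoint (mate_e0 yD) ye0 y_mate gP.
by move/(_ f' f f'D (inD f fP dis)) ->.
Qed.

Lemma card_recolour : #|recolour @: E| <= 1 + k * #|F|.
Proof.
have sub : recolour @: E \subset e0 |: \bigcup_(y in F) pencil y.
  apply/subsetP => _ /imsetP[f fE ->]; rewrite !inE.
  have [-> | fe0] := eqVneq f e0; first by rewrite recolour_e0 eqxx.
  have [y ye0 fP] := exists_foot fE fe0; apply/orP; right; apply/bigcupP.
  case: ifPn (recolour_pencil fP ye0) => [yF -> | yF [gP _]]; first by exists y.
  by exists (mate y); rewrite // mate_F // inE yF.
apply: leq_trans (subset_leq_card sub) _; rewrite cardsU1 mulnC.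
apply: leq_add; first by case: (_ \notin _).
apply: leq_trans (card_bigcup_leq _ _) _; rewrite -sum_nat_const.
by apply: eq_leq; apply: eq_bigr => y /(subsetP F_e0); exact: card_pencil.
Qed.

End Recolouring.

Lemma colorable_half : colorable E (1 + k * uphalf k).
Proof.
have [F [mate [F_e0 cardF mate_F mate_inj]]] := exists_half_pairing e0.
apply: (colorable_map (col := recolour F mate)) => //.
  exact: recolour_proper.
by rewrite (unifE e0E) in cardF; rewrite -cardF; apply: card_recolour.
Qed.

End Configuration.

Theorem theorem3p6 (k : nat) (V : finType) (E : {set {set V}}) (e0 : {set V}) :
  2 <= k ->
  hypergraph E ->
  linear E -> uniform k E ->
  #|V| = k ^ 2 -> #|E| = k ^ 2 + 1 ->
  e0 \in E ->
  (forall x, x \in e0 -> deg E x = k + 1) ->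
  (forall x, x \notin e0 -> k <= deg E x) ->
  [/\ Delta2 E = k ^ 2 - 1 /\ delta2 E = k ^ 2 - k,
      k + 1 <= chromatic_index E <= 1 + k * uphalf k
    & chromatic_index E <= Delta2 E].
Proof.
move=> k_ge2 _ linE unifE card_V card_E e0E deg_e0 deg_out_ge.
have [x xe0] : exists x, x \in e0 by apply/card_gt0P; rewrite (unifE e0 e0E); lia.
have upper : chromatic_index E <= 1 + k * uphalf k.
  apply: chromatic_index_leq; last by rewrite card_E; nia.
  exact: colorable_half linE unifE card_E e0E deg_e0 deg_out_ge.
have lower : k + 1 <= chromatic_index E.
  by rewrite -(deg_e0 x xe0) deg_leq_chromatic_index.
have Delta2E := Delta2_eq linE unifE card_E e0E deg_e0 deg_out_ge (ltnW k_ge2).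
have delta2E := delta2_eq linE unifE card_E e0E deg_e0 deg_out_ge k_ge2 card_V.
split; [by [] | by rewrite lower upper |].
by apply: leq_trans upper _; rewrite Delta2E; nia.
Qed.
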